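(* Let $\mathcal{A}\subset\mathbb{R}^d$ be a finite set and $\mathcal{X}=\{x_1,\dots,x_K\}\subset\mathbb{R}^d$. Let $\tilde{\mathbf p}\in\Delta^{(K)}$ be a minimizer of $\mathbf p\mapsto\max_{u,u'\in\mathcal{A}}\|u-u'\|^2_{\mathbf\Sigma_{-1,\mathbf p}^{-1}}$ over $\Delta^{(K)}$ with $\tilde p_1=0$, and define $\mathbf p_{\mathrm{xor}}(\mathcal{A}):=(\tfrac12,\tfrac12\tilde p_2,\dots,\tfrac12\tilde p_K)\in\Delta^{(K)}$. Then $$\mathcal{V}_{\mathrm{cov}}(\mathcal{A}:\mathcal{X},\mathbf p_{\mathrm{xor}}(\mathcal{A}))\le 4\,\mathcal{V}^\star_{\mathrm{lin}}(\mathcal{A}:\mathcal{X}-x_1).$$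
   Context: $\Delta^{(K)}$ is the probability simplex on $[K]$. For $\mathbf p\in\Delta^{(K)}$: $\bar x_{\mathbf p}:=\sum_ip_ix_i$, $\mathbf\Sigma_{\mathrm{cov},\mathbf p}:=\sum_{i=1}^Kp_i(x_i-\bar x_{\mathbf p})(x_i-\bar x_{\mathbf p})^\top$, and $\mathbf\Sigma_{-1,\mathbf p}:=\sum_{i=1}^Kp_i(x_i-x_1)(x_i-x_1)^\top$. For PSD $\mathbf A$, $\|x\|_{\mathbf A^{-1}}:=\lim_{\lambda\to0^+}\sqrt{x^\top(\mathbf A+\lambda\mathbf I_d)^{-1}x}$ (possibly $+\infty$). Define $\mathcal{V}_{\mathrm{cov}}(\mathcal{A}:\mathcal{X},\mathbf p):=\max_{u,u'\in\mathcal{A}}\|u-u'\|^2_{\mathbf\Sigma_{\mathrm{cov},\mathbf p}^{-1}}$ and $\mathcal{V}^\star_{\mathrm{lin}}(\mathcal{A}:\mathcal{X}-x_1):=\min_{\mathbf p\in\Delta^{(K)}}\max_{u,u'\in\mathcal{A}}\|u-u'\|^2_{\mathbf\Sigma_{-1,\mathbf p}^{-1}}$. (A minimizer with $\tilde p_1=0$ exists since the term $i=1$ contributes zero to $\mathbf\Sigma_{-1,\mathbf p}$.) *)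

From HB Require Import structures.
From mathcomp Require Import all_boot all_order all_algebra.
From mathcomp Require Import all_classical all_reals all_analysis.
Set Implicit Arguments. Unset Strict Implicit. Unset Printing Implicit Defensive.
Import Order.TTheory GRing.Theory Num.Theory.
Import numFieldNormedType.Exports.
Local Open Scope classical_set_scope.
Local Open Scope ring_scope.

(* Points x_1..x_K are indexed by 'I_K.+1 ; x_1 is x ord0. *)

Section Defs.
Variable R : realType.
Variable d : nat.

Definition simplex (n : nat) (p : 'I_n -> R) : Prop :=
  (forall i, 0 <= p i) /\ \sum_(i < n) p i = 1.

Definition inv_norm (A : 'M[R]_d) (x : 'cV[R]_d) : \bar R :=
  lim ((fun l : R => (Num.sqrt ((x^T *m invmx (A + l%:M) *m x) 0 0))%:E)
         @ 0^'+).

Definition inv_normsq (A : 'M[R]_d) (x : 'cV[R]_d) : \bar R :=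
  (inv_norm A x * inv_norm A x)%E.

Definition maxdiff (Aset : seq 'cV[R]_d) (M : 'M[R]_d) : \bar R :=
  \big[Order.max/-oo%E]_(u <- Aset) \big[Order.max/-oo%E]_(u' <- Aset)
     inv_normsq M (u - u').

Definition xbar (n : nat) (x : 'I_n -> 'cV[R]_d) (p : 'I_n -> R) : 'cV[R]_d :=
  \sum_(i < n) p i *: x i.

Definition Sigma_cov (n : nat) (x : 'I_n -> 'cV[R]_d) (p : 'I_n -> R)
  : 'M[R]_d :=
  \sum_(i < n) p i *: ((x i - xbar x p) *m (x i - xbar x p)^T).

Definition Sigma_m1 (K : nat) (x : 'I_K.+1 -> 'cV[R]_d) (p : 'I_K.+1 -> R)
  : 'M[R]_d :=
  \sum_(i < K.+1) p i *: ((x i - x ord0) *m (x i - x ord0)^T).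

Definition V_cov (Aset : seq 'cV[R]_d) (n : nat) (x : 'I_n -> 'cV[R]_d)
  (p : 'I_n -> R) : \bar R :=
  maxdiff Aset (Sigma_cov x p).

Definition lin_obj (Aset : seq 'cV[R]_d) (K : nat)
  (x : 'I_K.+1 -> 'cV[R]_d) (p : 'I_K.+1 -> R) : \bar R :=
  maxdiff Aset (Sigma_m1 x p).

(* V*_lin := min over the simplex (written as an infimum; it is attained) *)
Definition Vstar_lin (Aset : seq 'cV[R]_d) (K : nat)
  (x : 'I_K.+1 -> 'cV[R]_d) : \bar R :=
  ereal_inf [set lin_obj Aset x p | p in [set p | simplex p]].

Definition p_xor (K : nat) (pt : 'I_K.+1 -> R) : 'I_K.+1 -> R :=
  fun i => if i == ord0 then 2^-1 else pt i / 2.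

End Defs.

(* Since p~_1 = 0, the distribution p_xor is the even mixture of the point
   mass at x_1 and p~.  For every direction w, write s_i = w . (x_i - x_1), so
   that s_1 = 0, T = sum_i p~_i s_i^2 = w^T Sigma_{-1,p~} w and
   M = sum_i p~_i s_i.  The variance of s under the mixture is
   T/2 - M^2/4 >= T/4 by Jensen, i.e. Sigma_cov,p_xor >= Sigma_{-1,p~} / 4 in
   the Loewner order.  Matrix inversion reverses the Loewner order (also for
   the regularisations A + lI defining the possibly infinite norms), so every
   squared norm, hence V_cov, grows by at most the factor 4, and
   lin_obj at the minimiser p~ is V*_lin. *)

From HB Require Import structures.
From mathcomp Require Import all_boot all_order all_algebra.
From mathcomp Require Import all_classical all_reals all_analysis.
From mathcomp Require Import ring lra.
Set Implicit Arguments. Unset Strict Implicit. Unset Printing Implicit Defensive.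
Import Order.TTheory GRing.Theory Num.Theory.
Local Open Scope ring_scope.

Section QuadraticForms.
Variables (R : realType) (d : nat).
Implicit Types (A B C : 'M[R]_d) (u v w x : 'cV[R]_d).

Definition qform A w : R := (w^T *m A *m w) 0 0.
Definition vdot u v : R := (u^T *m v) 0 0.
Definition psd A := forall w, 0 <= qform A w.

Lemma qformD A B w : qform (A + B) w = qform A w + qform B w.
Proof. by rewrite /qform mulmxDr mulmxDl mxE. Qed.

Lemma qformZ c A w : qform (c *: A) w = c * qform A w.
Proof. by rewrite /qform -scalemxAr -scalemxAl mxE. Qed.

Lemma qform_sum n (F : 'I_n -> 'M[R]_d) w :
  qform (\sum_(i < n) F i) w = \sum_(i < n) qform (F i) w.
Proof.
apply: (big_morph (qform^~ w) (fun A B => qformD A B w)).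
by rewrite /qform mulmx0 mul0mx mxE.
Qed.

Lemma qform_scalar l w : qform l%:M w = l * vdot w w.
Proof. by rewrite /qform /vdot mul_mx_scalar -scalemxAl mxE. Qed.

Lemma vdotC u v : vdot u v = vdot v u.
Proof.
have tr11 (a : 'M[R]_1) : a 0 0 = a^T 0 0 by rewrite mxE.
by rewrite /vdot tr11 trmx_mul trmxK.
Qed.

Lemma qform_outer a w : qform (a *m a^T) w = vdot w a ^+ 2.
Proof.
rewrite /qform mulmxA -mulmxA [in LHS]mxE big_ord1.
by rewrite -/(vdot w a) -/(vdot a w) vdotC expr2.
Qed.

Lemma vdotB w u v : vdot w (u - v) = vdot w u - vdot w v.
Proof. by rewrite /vdot mulmxBr mxE [X in _ + X]mxE. Qed.

Lemma vdotZ w c v : vdot w (c *: v) = c * vdot w v.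
Proof. by rewrite /vdot -scalemxAr mxE. Qed.

Lemma vdot_sum n w (F : 'I_n -> 'cV[R]_d) :
  vdot w (\sum_(i < n) F i) = \sum_(i < n) vdot w (F i).
Proof.
apply: (big_morph (vdot w)); first by move=> u v; rewrite /vdot mulmxDr mxE.
by rewrite /vdot mulmx0 mxE.
Qed.

Lemma vdotvv w : vdot w w = \sum_(i < d) w i 0 ^+ 2.
Proof. by rewrite /vdot mxE; apply: eq_bigr => i _; rewrite mxE expr2. Qed.

Lemma vdot_ge0 w : 0 <= vdot w w.
Proof. by rewrite vdotvv sumr_ge0 // => i _; rewrite sqr_ge0. Qed.

Lemma vdot_gt0 w : w != 0 -> 0 < vdot w w.
Proof.
move=> w0; have [i wi] : exists i, w i 0 != 0.
  apply/existsP; apply: contraNT w0; rewrite negb_exists => /forallP w0.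
  by apply/eqP/matrixP => i j; rewrite ord1 mxE; apply/eqP/negPn/w0.
rewrite vdotvv (bigD1 i) //= ltr_pwDl //.
  by rewrite lt_def sqrf_eq0 wi sqr_ge0.
by rewrite sumr_ge0 // => j _; rewrite sqr_ge0.
Qed.

Lemma psd_addmx_scalar A l : psd A -> 0 <= l -> psd (A + l%:M).
Proof.
by move=> A0 l0 w; rewrite qformD qform_scalar addr_ge0 ?mulr_ge0 ?vdot_ge0.
Qed.

Lemma unitmx_psd_addmx_scalar A l : psd A -> 0 < l -> A + l%:M \in unitmx.
Proof.
move=> A0 l0; rewrite unitmxE unitfE; apply/negP => /det0P [v v0 vA].
have : qform (A + l%:M) v^T = 0 by rewrite /qform trmxK vA mul0mx mxE.
rewrite qformD qform_scalar; apply/eqP; rewrite gt_eqF //.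
by rewrite ltr_wpDl // mulr_gt0 // vdot_gt0 // trmx_eq0.
Qed.

Lemma trmx_addmx_scalar A l : A^T = A -> (A + l%:M)^T = A + l%:M.
Proof. by move=> As; rewrite linearD /= tr_scalar_mx As. Qed.

(* The quadratic form of C^-1 is the Legendre transform of that of C; the
   supremum over v is attained at v = C^-1 x. *)
Lemma qform_invmx_ge C v x : C^T = C -> C \in unitmx -> psd C ->
  2 * vdot v x - qform C v <= qform (invmx C) x.
Proof.
move=> Cs Cu C0; set z := invmx C *m x.
have Cz : C *m z = x by rewrite /z mulmxA mulmxV // mul1mx.
have zC : z^T *m C = x^T.
  by rewrite /z trmx_mul trmx_inv Cs -mulmxA mulVmx // mulmx1.
have : qform C (v - z) = qform C v - 2 * vdot v x + qform (invmx C) x.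
  rewrite /qform; have -> : (v - z)^T = v^T - z^T by rewrite linearB.
  rewrite mulmxBl zC mulmxBr !mulmxBl -(mulmxA v^T C z) Cz.
  have entryB (a b : 'M[R]_1) : (a - b) 0 0 = a 0 0 - b 0 0 by rewrite !mxE.
  rewrite !entryB /z mulmxA -/(vdot v x) -/(vdot x v) vdotC -!/(qform _ _); ring.
by have := C0 (v - z); lra.
Qed.

Lemma qform_invmx_attained C x : C^T = C -> C \in unitmx ->
  qform (invmx C) x = 2 * vdot (invmx C *m x) x - qform C (invmx C *m x).
Proof.
move=> Cs Cu; rewrite /qform /vdot trmx_mul trmx_inv Cs.
rewrite -(mulmxA x^T (invmx C) C) mulVmx // mulmx1 mulmxA; ring.
Qed.

Lemma qform_invmx_antitone C1 C2 x :
  C1^T = C1 -> C2^T = C2 -> C1 \in unitmx -> C2 \in unitmx -> psd C1 ->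
  (forall w, qform C1 w <= qform C2 w) ->
  qform (invmx C2) x <= qform (invmx C1) x.
Proof.
move=> C1s C2s C1u C2u C10 C12; rewrite (qform_invmx_attained x C2s C2u).
apply: le_trans (qform_invmx_ge (invmx C2 *m x) x C1s C1u C10).
by rewrite lerD2l lerN2.
Qed.

End QuadraticForms.

Section InverseNorm.
Variables (R : realType) (d : nat).
Implicit Types (A B : 'M[R]_d) (x : 'cV[R]_d).

Definition inv_norm_reg A x l : R := Num.sqrt (qform (invmx (A + l%:M)) x).

Lemma inv_norm_reg_antitone A x l1 l2 : A^T = A -> psd A -> 0 < l1 ->
  l1 <= l2 -> inv_norm_reg A x l2 <= inv_norm_reg A x l1.
Proof.
move=> As A0 l10 l12; apply: ler_wsqrtr; apply: qform_invmx_antitone.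
- exact: trmx_addmx_scalar.
- exact: trmx_addmx_scalar.
- exact: unitmx_psd_addmx_scalar.
- by rewrite unitmx_psd_addmx_scalar // (lt_le_trans l10 l12).
- by apply: psd_addmx_scalar => //; apply: ltW.
- by move=> w; rewrite !qformD !qform_scalar lerD2l ler_wpM2r ?vdot_ge0.
Qed.

Lemma inv_norm_sup A x : A^T = A -> psd A ->
  inv_norm A x = ereal_sup [set (inv_norm_reg A x l)%:E | l in `]0, +oo[%classic].
Proof.
move=> As A0; apply: cvg_lim; first exact: ereal_hausdorff.
apply: (nonincreasing_at_right_cvge (BInfty _ false)) => // l1 l2.
rewrite !in_itv /= !andbT => l10 _ l12.
by rewrite lee_fin inv_norm_reg_antitone.
Qed.

Lemma inv_norm_ge0 A x : A^T = A -> psd A -> (0 <= inv_norm A x)%E.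
Proof.
move=> As A0; rewrite inv_norm_sup //.
apply: (@le_trans _ _ (inv_norm_reg A x 1)%:E); first by rewrite lee_fin sqrtr_ge0.
by apply: ereal_sup_ubound; exists 1 => //=; rewrite in_itv /= andbT.
Qed.

Section LoewnerScaling.
Variables (A B : 'M[R]_d) (c : R).
Hypotheses (As : A^T = A) (Bs : B^T = B) (B0 : psd B) (c0 : 0 < c).
Hypothesis BcA : forall w, qform B w <= c * qform A w.

Let A0 : psd A.
Proof. by move=> w; rewrite -(pmulr_rge0 _ c0); apply: le_trans (BcA w). Qed.

(* A + l I >= (B + c l I) / c in the Loewner order. *)
Lemma qform_invmx_addmx_scale x l : 0 < l ->
  qform (invmx (A + l%:M)) x <= c * qform (invmx (B + (c * l)%:M)) x.
Proof.
move=> l0; have cl0 : 0 < c * l by rewrite mulr_gt0.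
have cVu : c^-1 \is a GRing.unit by rewrite unitfE invr_neq0 ?gt_eqF.
have Bu : B + (c * l)%:M \in unitmx by exact: unitmx_psd_addmx_scalar.
rewrite -qformZ -[c in c *: _]invrK -invmxZ ?unitmxZ //.
apply: qform_invmx_antitone.
- by rewrite linearZ /= trmx_addmx_scalar.
- exact: trmx_addmx_scalar.
- by rewrite unitmxZ.
- exact: unitmx_psd_addmx_scalar.
- by move=> w; rewrite qformZ mulr_ge0 ?invr_ge0 ?(ltW c0) ?psd_addmx_scalar ?ltW.
- move=> w; rewrite qformZ !qformD !qform_scalar ler_pdivrMl //.
  by have := BcA w; lra.
Qed.

Lemma inv_norm_le_scale x :
  (inv_norm A x <= (Num.sqrt c)%:E * inv_norm B x)%E.
Proof.
rewrite !inv_norm_sup //; apply: ge_ereal_sup => _ [l /= + <-].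
rewrite in_itv /= andbT => l0.
have cl0 : 0 < c * l by rewrite mulr_gt0.
apply: (@le_trans _ _ ((Num.sqrt c)%:E * (inv_norm_reg B x (c * l))%:E)%E).
  rewrite -EFinM lee_fin /inv_norm_reg -(sqrtrM _ (ltW c0)).
  exact/ler_wsqrtr/qform_invmx_addmx_scale.
apply: lee_wpmul2l; first by rewrite lee_fin sqrtr_ge0.
by apply: ereal_sup_ubound; exists (c * l) => //=; rewrite in_itv /= andbT.
Qed.

Lemma inv_normsq_le_scale x :
  (inv_normsq A x <= c%:E * inv_normsq B x)%E.
Proof.
have a0 := inv_norm_ge0 x As A0; have b0 := inv_norm_ge0 x Bs B0.
have ab := inv_norm_le_scale x.
apply: le_trans (lee_pmul a0 a0 ab ab) _.
by rewrite muleACA -EFinM -expr2 sqr_sqrtr ?(ltW c0).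
Qed.

End LoewnerScaling.

Lemma maxdiff_le_scale (S : seq 'cV[R]_d) A B c : 0 <= c ->
  (forall v, inv_normsq A v <= c%:E * inv_normsq B v)%E ->
  (maxdiff S A <= c%:E * maxdiff S B)%E.
Proof.
move=> c0 AB; rewrite /maxdiff big_seq.
apply: bigmax_le => [|u uS]; first exact: leNye.
rewrite big_seq; apply: bigmax_le => [|v vS]; first exact: leNye.
apply: le_trans (AB _) _; apply: lee_wpmul2l; first by rewrite lee_fin.
apply: le_trans (le_bigmax_seq _ u _ _ uS isT).
exact: (le_bigmax_seq _ v _ (fun v => inv_normsq B (u - v)) vS isT).
Qed.

End InverseNorm.

Section WeightedOuterProducts.
Variables (R : realType) (d n : nat).
Implicit Types (p : 'I_n -> R) (a : 'I_n -> 'cV[R]_d).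

Lemma trmx_sum_outer p a :
  (\sum_(i < n) p i *: (a i *m (a i)^T))^T = \sum_(i < n) p i *: (a i *m (a i)^T).
Proof.
by rewrite linear_sum; apply: eq_bigr => i _; rewrite linearZ /= trmx_mul trmxK.
Qed.

Lemma qform_sum_outer p a w :
  qform (\sum_(i < n) p i *: (a i *m (a i)^T)) w =
  \sum_(i < n) p i * vdot w (a i) ^+ 2.
Proof. by rewrite qform_sum; apply: eq_bigr => i _; rewrite qformZ qform_outer. Qed.

Lemma psd_sum_outer p a : (forall i, 0 <= p i) ->
  psd (\sum_(i < n) p i *: (a i *m (a i)^T)).
Proof.
by move=> p0 w; rewrite qform_sum_outer sumr_ge0 // => i _; rewrite mulr_ge0 ?sqr_ge0.
Qed.

Lemma vdot_centered (x : 'I_n -> 'cV[R]_d) p (c w : 'cV[R]_d) i :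
  \sum_(j < n) p j = 1 ->
  vdot w (x i - xbar x p) = vdot w (x i - c) - \sum_(j < n) p j * vdot w (x j - c).
Proof.
move=> p1; rewrite /xbar !vdotB vdot_sum.
under eq_bigr do rewrite vdotZ.
under [X in _ = _ - X]eq_bigr do rewrite vdotB mulrBr.
rewrite sumrB -mulr_suml p1 mul1r; ring.
Qed.

Lemma weighted_variance p (s : 'I_n -> R) : \sum_(i < n) p i = 1 ->
  \sum_(i < n) p i * (s i - \sum_(j < n) p j * s j) ^+ 2 =
  \sum_(i < n) p i * s i ^+ 2 - (\sum_(j < n) p j * s j) ^+ 2.
Proof.
move=> p1; set m := \sum_(j < n) p j * s j.
have expand i :
  p i * (s i - m) ^+ 2 = p i * s i ^+ 2 - 2 * m * (p i * s i) + m ^+ 2 * p i.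
  by ring.
rewrite (eq_bigr _ (fun i _ => expand i)) big_split sumrB /= -!mulr_sumr p1 -/m.
ring.
Qed.

End WeightedOuterProducts.

Section XorDistribution.
Variables (R : realType) (K : nat) (pt : 'I_K.+1 -> R).
Hypotheses (spt : simplex pt) (pt0 : pt ord0 = 0).

Lemma sum_p_xor (g : 'I_K.+1 -> R) :
  \sum_(i < K.+1) p_xor pt i * g i = (\sum_(i < K.+1) pt i * g i) / 2 + g ord0 / 2.
Proof.
rewrite (bigD1 ord0) //= [X in _ = X / 2 + _](bigD1 ord0) //= pt0 mul0r add0r.
rewrite /p_xor eqxx mulr_suml addrC mulrC.
by congr (_ + _); apply: eq_bigr => i /negbTE ->; rewrite mulrAC.
Qed.

Lemma simplex_p_xor : simplex (p_xor pt).
Proof.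
case: spt => pge pt1; split=> [i|].
  by rewrite /p_xor; case: ifP; rewrite ?invr_ge0 ?divr_ge0.
under eq_bigr do rewrite -[p_xor pt _]mulr1.
rewrite sum_p_xor; under eq_bigr do rewrite mulr1.
by rewrite pt1; lra.
Qed.

Lemma second_moment_le_variance_p_xor (s : 'I_K.+1 -> R) : s ord0 = 0 ->
  \sum_(i < K.+1) pt i * s i ^+ 2 <=
  4 * \sum_(i < K.+1) p_xor pt i * (s i - \sum_(j < K.+1) p_xor pt j * s j) ^+ 2.
Proof.
case: spt => pge pt1 s0; have [_ pxor1] := simplex_p_xor.
rewrite weighted_variance // !sum_p_xor s0 expr0n /= mul0r.
set T := \sum_(i < K.+1) pt i * s i ^+ 2; set M := \sum_(i < K.+1) pt i * s i.
have : 0 <= T - M ^+ 2.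
  by rewrite -weighted_variance // sumr_ge0 // => i _; rewrite mulr_ge0 ?sqr_ge0.
nra.
Qed.

End XorDistribution.

Lemma qform_Sigma_m1_le_cov (R : realType) (d K : nat)
  (x : 'I_K.+1 -> 'cV[R]_d) (pt : 'I_K.+1 -> R) w :
  simplex pt -> pt ord0 = 0 ->
  qform (Sigma_m1 x pt) w <= 4 * qform (Sigma_cov x (p_xor pt)) w.
Proof.
move=> spt pt0; have [_ pxor1] := simplex_p_xor spt pt0.
rewrite /Sigma_m1 /Sigma_cov !qform_sum_outer.
under [X in _ <= _ * X]eq_bigr do rewrite (vdot_centered _ (x ord0) _ _ pxor1).
by apply: second_moment_le_variance_p_xor; rewrite // subrr /vdot mulmx0 mxE.
Qed.

Lemma Vstar_linE (R : realType) (d K : nat) (S : seq 'cV[R]_d)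
  (x : 'I_K.+1 -> 'cV[R]_d) (pt : 'I_K.+1 -> R) :
  simplex pt -> (forall p, simplex p -> (lin_obj S x pt <= lin_obj S x p)%E) ->
  Vstar_lin S x = lin_obj S x pt.
Proof.
move=> spt pt_min; apply/le_anti/andP; split.
  by apply: ereal_inf_lbound; exists pt.
by apply/ereal_infP => _ [p sp <-]; exact: pt_min.
Qed.

Theorem mainTheorem4 (R : realType) (d K : nat)
  (Aset : seq 'cV[R]_d) (x : 'I_K.+1 -> 'cV[R]_d) (pt : 'I_K.+1 -> R) :
  simplex pt ->
  (forall p : 'I_K.+1 -> R, simplex p ->
     (lin_obj Aset x pt <= lin_obj Aset x p)%E) ->
  pt ord0 = 0 ->
  (V_cov Aset x (p_xor pt) <= 4%:E * Vstar_lin Aset x)%E.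
Proof.
move=> spt pt_min pt0; have [pge _] := spt.
rewrite (Vstar_linE spt pt_min) /V_cov /lin_obj.
apply: maxdiff_le_scale => // v; apply: inv_normsq_le_scale => //.
- exact: trmx_sum_outer.
- exact: trmx_sum_outer.
- exact: psd_sum_outer.
- by move=> w; apply: qform_Sigma_m1_le_cov.
Qed.
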